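(* Let $\Gamma$ be a finite undirected simple graph with vertex set $V=\{x_1,\dots,x_n\}$ such that no vertex has degree $n-1$, and suppose $\Gamma=\ast_{i=1}^k\Gamma^{(i)}$ where no $\Gamma^{(i)}$ can be written as a simplicial join of two graphs with nonempty vertex sets. Identify $G_\Gamma$ with $\prod_{i=1}^k G_{\Gamma^{(i)}}$ and set $H^{(i)}=G_{\Gamma^{(i)}}\gamma_2(G_\Gamma)$, i.e. $H^{(i)}=\gamma_2(G_{\Gamma^{(1)}})\times\cdots\times\gamma_2(G_{\Gamma^{(i-1)}})\times G_{\Gamma^{(i)}}\times\gamma_2(G_{\Gamma^{(i+1)}})\times\cdots\times\gamma_2(G_{\Gamma^{(k)}})$. Then for every automorphism $\varphi$ of $G_\Gamma$ there exists a unique permutation $\sigma\in S_k$ such that (i) $\varphi(H^{(i)})=H^{(\sigma(i))}$ for all $i=1,\dots,k$, and (ii) $\Gamma^{(i)}\cong\Gamma^{(\sigma(i))}$ for all $i=1,\dots,k$.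
   Context: For a finite undirected simple graph $\Gamma$ with vertex set $\{x_1,\dots,x_n\}$ and edge set $E$, the group $G_\Gamma$ is defined by the presentation with generators $x_1,\dots,x_n$ and $y_{i,j}$ for each pair $i<j$ with $x_ix_j\notin E$, and relations $[x_j,x_i]=1$ if $x_ix_j\in E$; $[x_j,x_i]=y_{i,j}$ if $x_ix_j\notin E$ and $i<j$; and $[x_l,y_{i,j}]=1$ for all $l$ and all such $y_{i,j}$. The simplicial join $\ast_{i=1}^k\Gamma_i$ of graphs $\Gamma_i(V_i,E_i)$ is the graph with vertex set $\bigsqcup_i V_i$ and edge set $\bigsqcup_i E_i\cup\{vw: v\in V_i, w\in V_j, i<j\}$; the group of a simplicial join is the direct product of the groups of the factors. $\gamma_2(G)=[G,G]$ denotes the commutator subgroup. *)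

From mathcomp Require Import all_boot.
Set Implicit Arguments. Unset Strict Implicit. Unset Printing Implicit Defensive.

(* Graphs: vertex set 'I_n = {x_1,...,x_n} (0-indexed), edge relation e. *)

(* The group G_Gamma, defined by its presentation, as a setoid of words. *)

Definition Ygen (n : nat) (e : rel 'I_n) :=
  {p : 'I_n * 'I_n | (p.1 < p.2)%N && ~~ e p.1 p.2}.

(* generators: x_v (inl v) and y_{i,j} (inr p) *)
Definition gen (n : nat) (e : rel 'I_n) := ('I_n + Ygen e)%type.

(* a letter (b, g) stands for g if b = false and g^-1 if b = true *)
Definition word (n : nat) (e : rel 'I_n) := seq (bool * gen e).

Definition winv n (e : rel 'I_n) (w : word e) : word e :=
  rev (map (fun l => (~~ l.1, l.2)) w).

Definition wcomm n (e : rel 'I_n) (u v : word e) : word e :=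
  winv u ++ winv v ++ u ++ v.

Definition wx n (e : rel 'I_n) (v : 'I_n) : word e := [:: (false, inl v)].
Definition wy n (e : rel 'I_n) (p : Ygen e) : word e := [:: (false, inr p)].

Inductive relator n (e : rel 'I_n) : word e -> Prop :=
| rel_edge (i j : 'I_n) : e i j -> relator (wcomm (wx e j) (wx e i))
| rel_nonedge (p : Ygen e) :
    relator (wcomm (wx e (sval p).2) (wx e (sval p).1) ++ winv (wy p))
| rel_central (l : 'I_n) (p : Ygen e) : relator (wcomm (wx e l) (wy p)).

(* equality in G_Gamma: the congruence on words generated by free
   cancellation and the relators *)
Inductive wrel n (e : rel 'I_n) : word e -> word e -> Prop :=
| wr_refl w : wrel w w
| wr_sym u v : wrel u v -> wrel v u
| wr_trans u v w : wrel u v -> wrel v w -> wrel u w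
| wr_free (u v : word e) b g : wrel (u ++ (b, g) :: (~~ b, g) :: v) (u ++ v)
| wr_rel (u v r : word e) : relator r -> wrel (u ++ r ++ v) (u ++ v).

(* automorphisms of G_Gamma, represented by maps on words that are
   well defined on G_Gamma, multiplicative, injective and surjective *)
Definition is_aut n (e : rel 'I_n) (phi : word e -> word e) : Prop :=
  [/\ (forall u v, wrel u v -> wrel (phi u) (phi v)),
      (forall u v, wrel (phi (u ++ v)) (phi u ++ phi v)),
      (forall u v, wrel (phi u) (phi v) -> wrel u v) &
      (forall w, exists u, wrel (phi u) w)].

Inductive gsub n (e : rel 'I_n) (S : word e -> Prop) : word e -> Prop :=
| gs_base w : S w -> gsub S w
| gs_nil : gsub S [::]
| gs_mul u v : gsub S u -> gsub S v -> gsub S (u ++ v)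
| gs_inv u : gsub S u -> gsub S (winv u)
| gs_eq u v : wrel u v -> gsub S u -> gsub S v.

(* H^(i) = G_{Gamma^(i)} gamma_2(G_Gamma): generated by the x_v with v in
   the i-th join factor together with all commutators *)
Definition Hsub n (e : rel 'I_n) k (part : 'I_n -> 'I_k) (i : 'I_k) :=
  gsub (fun w : word e => (exists v, part v = i /\ w = wx e v)
                          \/ exists a b, w = wcomm a b).

Definition maps_onto n (e : rel 'I_n) (phi : word e -> word e)
    (H H' : word e -> Prop) : Prop :=
  (forall w, H w -> H' (phi w)) /\
  (forall w, H' w -> exists u, H u /\ wrel (phi u) w).

(* Gamma = *_{i<k} Gamma^(i), where Gamma^(i) is the induced subgraph on
   the nonempty vertex class {v | part v = i} *)
Definition join_decomp n (e : rel 'I_n) k (part : 'I_n -> 'I_k) : Prop :=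
  (forall i : 'I_k, exists v, part v = i) /\
  (forall u v, part u != part v -> e u v).

Definition join_irreducible_part n (e : rel 'I_n) k (part : 'I_n -> 'I_k)
    (i : 'I_k) : Prop :=
  forall A : {set 'I_n},
    (forall v, v \in A -> part v = i) -> A != set0 ->
    (exists w, part w = i /\ w \notin A) ->
    exists u v, [/\ u \in A, part v = i, v \notin A & ~~ e u v].

Definition parts_iso n (e : rel 'I_n) k (part : 'I_n -> 'I_k) (i j : 'I_k) :=
  exists f : 'I_n -> 'I_n,
    [/\ (forall u v, part u = i -> part v = i -> f u = f v -> u = v),
        (forall v, part v = i -> part (f v) = j),
        (forall w, part w = j -> exists v, part v = i /\ f v = w) &
        (forall u v, part u = i -> part v = i -> e (f u) (f v) = e u v)].

Arguments Hsub {n} e {k} part i.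
Arguments join_decomp {n} e {k} part.
Arguments join_irreducible_part {n} e {k} part i.
Arguments parts_iso {n} e {k} part i j.

(* G_Gamma is nilpotent of class 2, so phi induces an invertible integer matrix
   M on the abelianization Z^n, and commutation in G_Gamma is read off Z^n:
   Heisenberg quotients show that commuting elements have abelianizations whose
   2x2 minors vanish on every non-edge, while elements supported on joined sets
   of vertices commute.  A nonzero term of det M gives a permutation pi with
   M u (pi u) <> 0 for all u.  Playing these two facts against each other shows
   that pi preserves edges, hence is a graph automorphism, and (using a
   non-neighbour of every vertex) that row u of M is supported on
   pi(Gamma^(i)) when u lies in Gamma^(i).  Join-irreducibility makes pi permute
   the factors through some sigma; since H^(i) is the preimage of Z^(Gamma^(i))
   under abelianization, phi maps H^(i) onto H^(sigma i), and sigma is unique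
   because the H^(i) are pairwise distinct. *)

From Stdlib Require Import Setoid.
From mathcomp Require Import all_boot all_fingroup all_algebra.
From mathcomp Require Import zify ring.

Set Implicit Arguments. Unset Strict Implicit. Unset Printing Implicit Defensive.

Section WordCongruence.
Variables (n : nat) (e : rel 'I_n).
Implicit Types u v w : word e.

Lemma wrel_catl w u v : wrel u v -> wrel (w ++ u) (w ++ v).
Proof.
elim=> {u v} [u|u v _ IH|u v x _ IH1 _ IH2|u v b g|u v r hr].
- exact: wr_refl.
- exact: wr_sym.
- exact: wr_trans IH1 IH2.
- by rewrite !catA; apply: wr_free.
- by move: (wr_rel (w ++ u) v hr); rewrite -!catA.
Qed.

Lemma wrel_catr w u v : wrel u v -> wrel (u ++ w) (v ++ w).
Proof.
elim=> {u v} [u|u v _ IH|u v x _ IH1 _ IH2|u v b g|u v r hr].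
- exact: wr_refl.
- exact: wr_sym.
- exact: wr_trans IH1 IH2.
- by rewrite -!catA /=; apply: wr_free.
- by move: (wr_rel u (v ++ w) hr); rewrite -!catA.
Qed.

End WordCongruence.

#[global] Hint Resolve wr_refl : core.

Add Parametric Relation (n : nat) (e : rel 'I_n) : (word e) (@wrel n e)
  reflexivity proved by (@wr_refl n e)
  symmetry proved by (@wr_sym n e)
  transitivity proved by (@wr_trans n e) as wrel_equivalence.

Add Parametric Morphism (n : nat) (e : rel 'I_n) : (@cat (bool * gen e))
  with signature (@wrel n e) ==> (@wrel n e) ==> (@wrel n e) as cat_wrel_morphism.
Proof. by move=> u u' hu v v' hv; apply: wr_trans (wrel_catr _ hu) (wrel_catl _ hv). Qed.

Section WordGroup.
Variables (n : nat) (e : rel 'I_n).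
Implicit Types u v w a b z : word e.

Lemma winv_cat u v : winv (u ++ v) = winv v ++ winv u.
Proof. by rewrite /winv map_cat rev_cat. Qed.

Lemma winvK : involutive (@winv n e).
Proof.
move=> u; rewrite /winv map_rev revK -map_comp.
by elim: u => //= [[b g] u ->]; rewrite /= negbK.
Qed.

Lemma winv_cons l u : winv (l :: u) = winv u ++ [:: (~~ l.1, l.2)].
Proof. by rewrite /winv map_cons rev_cons cats1. Qed.

Lemma wrel_mulKg u w : wrel (winv u ++ u ++ w) w.
Proof.
elim: u w => [|[b g] u IH] w //=.
rewrite winv_cons -catA /=.
have := wr_free (winv u) (u ++ w) (~~ b) g; rewrite negbK => /wr_trans; apply.
exact: IH.
Qed.

Lemma wrel_mulKVg u w : wrel (u ++ winv u ++ w) w.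
Proof. by have := wrel_mulKg (winv u) w; rewrite winvK. Qed.

Lemma wrel_mulVg u : wrel (winv u ++ u) [::].
Proof. by have := wrel_mulKg u [::]; rewrite cats0. Qed.

Lemma wrel_mulgV u : wrel (u ++ winv u) [::].
Proof. by have := wrel_mulKVg u [::]; rewrite cats0. Qed.

Lemma winv_wcomm a b : winv (wcomm a b) = wcomm b a.
Proof. by rewrite /wcomm !winv_cat !winvK -!catA. Qed.

Lemma relator1 (r : word e) : relator r -> wrel r [::].
Proof. by move=> h; have := wr_rel [::] [::] h; rewrite cats0. Qed.

Lemma wy_wcomm (p : Ygen e) :
  wrel (wcomm (wx e (sval p).2) (wx e (sval p).1)) (wy p).
Proof.
have := wrel_catr (wy p) (relator1 (rel_nonedge p)).
by rewrite -catA wrel_mulVg cats0.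
Qed.

Definition wcommute a b := wrel (a ++ b) (b ++ a).

Definition central z := forall w, wcommute z w.

Lemma wcomm_swap a b : wrel (b ++ a ++ wcomm a b) (a ++ b).
Proof. by rewrite /wcomm !wrel_mulKVg. Qed.

Lemma wcommuteP a b : wcommute a b <-> wrel (wcomm a b) [::].
Proof.
split=> h; last by rewrite /wcommute -(wcomm_swap a b) h cats0.
by rewrite /wcomm (h : wrel (a ++ b) (b ++ a)) wrel_mulKg wrel_mulVg.
Qed.

Lemma wcommute_sym a b : wcommute a b -> wcommute b a.
Proof. exact: wr_sym. Qed.

Lemma wcommute_wrel a a' b b' :
  wrel a a' -> wrel b b' -> wcommute a b -> wcommute a' b'.
Proof. by rewrite /wcommute => -> ->. Qed.

Lemma wcommute_catl a a' b :
  wcommute a b -> wcommute a' b -> wcommute (a ++ a') b.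
Proof. by rewrite /wcommute => h h'; rewrite -catA h' catA h -catA. Qed.

Lemma wcommute_winvl a b : wcommute a b -> wcommute (winv a) b.
Proof.
rewrite /wcommute => h.
transitivity (winv a ++ (b ++ a) ++ winv a); first by rewrite -catA wrel_mulgV cats0.
by rewrite -h -catA wrel_mulKg.
Qed.

Lemma wcommute_letter g (b : bool) w :
  wcommute [:: (false, g)] w -> wcommute [:: (b, g)] w.
Proof. by case: b => // /wcommute_winvl. Qed.

Lemma wcommute_letters v a : (forall l, l \in v -> wcommute [:: l] a) -> wcommute v a.
Proof.
elim: v => [|l v IH] h; first by rewrite /wcommute cats0.
rewrite -cat1s; apply: wcommute_catl; first by apply: h; rewrite mem_head.
by apply: IH => l' hl'; apply: h; rewrite inE hl' orbT.
Qed.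

Lemma wcommute_edge i j : e i j -> wcommute (wx e j) (wx e i).
Proof. by move=> h; apply/wcommuteP/relator1/rel_edge. Qed.

Lemma central_wrel z z' : wrel z z' -> central z -> central z'.
Proof. by move=> h hz w; apply: wcommute_wrel h _ (hz w). Qed.

Lemma central_nil : central [::].
Proof. by move=> w; rewrite /wcommute cats0. Qed.

Lemma central_cat z z' : central z -> central z' -> central (z ++ z').
Proof. by move=> h h' w; apply: wcommute_catl. Qed.

Lemma central_winv z : central z -> central (winv z).
Proof. by move=> h w; apply: wcommute_winvl. Qed.

Lemma central_conj z g : central z -> wrel (winv g ++ z ++ g) z.
Proof. by move=> h; rewrite (h g : wrel (z ++ g) (g ++ z)) wrel_mulKg. Qed.

Lemma central_wcomm_commute a b : wcommute a b -> central (wcomm a b).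
Proof. by move/wcommuteP=> h; apply: central_wrel central_nil; symmetry. Qed.

Lemma wy_central p : central (wy p).
Proof.
move=> w; apply/wcommute_sym/wcommute_letters => -[b [v|q]] _;
  apply: wcommute_letter; first exact/wcommuteP/relator1/rel_central.
apply: wcommute_wrel (wy_wcomm q) _ _ => //; apply: wcommute_letters => l.
by rewrite !inE => /or4P [] /eqP ->; apply: wcommute_letter;
  apply/wcommuteP/relator1/rel_central.
Qed.

Lemma wcomm_catr a b1 b2 :
  wrel (wcomm a (b1 ++ b2)) (wcomm a b2 ++ winv b2 ++ wcomm a b1 ++ b2).
Proof. by rewrite /wcomm winv_cat -!catA; symmetry; rewrite !wrel_mulKVg. Qed.

Lemma wcomm_catl a1 a2 b :
  wrel (wcomm (a1 ++ a2) b) ((winv a2 ++ wcomm a1 b ++ a2) ++ wcomm a2 b).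
Proof. by rewrite /wcomm winv_cat -!catA; symmetry; rewrite !wrel_mulKVg. Qed.

Lemma central_wcomm_winvl a b : central (wcomm a b) -> central (wcomm (winv a) b).
Proof.
move=> h; have h' : central (wcomm b a) by rewrite -winv_wcomm; apply: central_winv.
apply: (central_wrel _ h').
by rewrite -{1}(central_conj (winv a) h') winvK /wcomm winvK -!catA wrel_mulgV cats0.
Qed.

Lemma central_wcomm_winvr a b : central (wcomm a b) -> central (wcomm a (winv b)).
Proof.
move=> h; have h' : central (wcomm b a) by rewrite -winv_wcomm; apply: central_winv.
apply: (central_wrel _ h').
by rewrite -{1}(central_conj (winv b) h') winvK /wcomm winvK -!catA wrel_mulKVg.
Qed.

Hypothesis e_sym : symmetric e.

Lemma central_wcomm_wx i j : central (wcomm (wx e i) (wx e j)).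
Proof.
have [->|nij] := eqVneq i j; first by apply: central_wcomm_commute; rewrite /wcommute.
case hij: (e i j); first by apply/central_wcomm_commute/wcommute_edge; rewrite e_sym.
case: (ltngtP i j) => hlt.
- have hp : ((i, j).1 < (i, j).2)%N && ~~ e (i, j).1 (i, j).2 by rewrite /= hlt hij.
  have /= hw := wy_wcomm (exist _ (i, j) hp).
  by rewrite -winv_wcomm; apply/central_winv/(central_wrel (wr_sym hw))/wy_central.
- have hp : ((j, i).1 < (j, i).2)%N && ~~ e (j, i).1 (j, i).2 by rewrite /= hlt e_sym hij.
  have /= hw := wy_wcomm (exist _ (j, i) hp).
  exact: central_wrel (wr_sym hw) (wy_central _).
- by move: nij; rewrite -val_eqE /= hlt eqxx.
Qed.

Lemma central_wcomm_letters l l' : central (wcomm [:: l] [:: l']).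
Proof.
have hy (c : bool) p : central [:: (c, inr p)].
  by case: c; [exact: central_winv (wy_central p) | exact: wy_central].
case: l l' => [c [i|p]] [c' [j|q]]; last 3 first.
- exact/central_wcomm_commute/wcommute_sym/hy.
- exact/central_wcomm_commute/hy.
- exact/central_wcomm_commute/hy.
have wxE (d : bool) (x : 'I_n) :
    [:: (d, inl x)] = if d then winv (wx e x) else wx e x :> word e by case: d.
rewrite !wxE; have := central_wcomm_wx i j.
by case: c; case: c' => h;
  do ?[apply: central_wcomm_winvl]; do ?[apply: central_wcomm_winvr].
Qed.

Lemma central_wcomm a b : central (wcomm a b).
Proof.
have central_wcomm1 l w : central (wcomm [:: l] w).
  elim: w => [|l' w IH]; first by apply: central_wcomm_commute; rewrite /wcommute.
  rewrite -[l' :: w]cat1s; apply: central_wrel (wr_sym (wcomm_catr _ _ _)) _.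
  apply: central_cat => //.
  apply: central_wrel (wr_sym (central_conj _ (central_wcomm_letters l l'))) _.
  exact: central_wcomm_letters.
elim: a => [|l a IH]; first by apply: central_wcomm_commute; rewrite /wcommute cats0.
rewrite -[l :: a]cat1s; apply: central_wrel (wr_sym (wcomm_catl _ _ _)) _.
apply: central_cat => //.
exact: central_wrel (wr_sym (central_conj _ (central_wcomm1 l b))) (central_wcomm1 l b).
Qed.

End WordGroup.

Import GRing.Theory.
Local Open Scope ring_scope.

(* [(a, b, c)] is the unitriangular matrix [[1, a, c], [0, 1, b], [0, 0, 1]]. *)
Definition heis := (int * int * int)%type.
Definition hmul (x y : heis) : heis :=
  (x.1.1 + y.1.1, x.1.2 + y.1.2, x.2 + y.2 + x.1.1 * y.1.2).
Definition hinv (x : heis) : heis := (- x.1.1, - x.1.2, - x.2 + x.1.1 * x.1.2).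
Definition hone : heis := (0, 0, 0).
Definition hcomm (x y : heis) := hmul (hinv x) (hmul (hinv y) (hmul x (hmul y hone))).

Lemma hmulA x y z : hmul x (hmul y z) = hmul (hmul x y) z.
Proof.
by case: x => [[? ?] ?]; case: y => [[? ?] ?]; case: z => [[? ?] ?];
  congr (_, _, _); rewrite /=; ring.
Qed.

Lemma hmul1g x : hmul hone x = x.
Proof. by case: x => [[? ?] ?]; congr (_, _, _); rewrite /=; ring. Qed.

Lemma hmulg1 x : hmul x hone = x.
Proof. by case: x => [[? ?] ?]; congr (_, _, _); rewrite /=; ring. Qed.

Lemma hmulgV x : hmul x (hinv x) = hone.
Proof. by case: x => [[? ?] ?]; congr (_, _, _); rewrite /=; ring. Qed.

Lemma hmulVg x : hmul (hinv x) x = hone.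
Proof. by case: x => [[? ?] ?]; congr (_, _, _); rewrite /=; ring. Qed.

Lemma hcomm_trivial x y : x.1.1 * y.1.2 = y.1.1 * x.1.2 -> hcomm x y = hone.
Proof.
by case: x => [[a b] c]; case: y => [[a' b'] c'] /= h; congr (_, _, _); rewrite /=; lia.
Qed.

Section Abelianization.
Variables (n : nat) (e : rel 'I_n).
Implicit Types u v w : word e.

Definition ab_letter (l : bool * gen e) : 'rV[int]_n :=
  if l.2 is inl x then (-1) ^+ l.1 *: delta_mx 0 x else 0.

Definition ab w : 'rV[int]_n := \sum_(l <- w) ab_letter l.

Lemma ab_nil : ab [::] = 0.
Proof. exact: big_nil. Qed.

Lemma ab_cons l w : ab (l :: w) = ab_letter l + ab w.
Proof. exact: big_cons. Qed.

Lemma ab_cat u w : ab (u ++ w) = ab u + ab w.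
Proof. exact: big_cat. Qed.

Lemma ab_wx x : ab (wx e x) = delta_mx 0 x.
Proof. by rewrite ab_cons ab_nil addr0 /ab_letter /= expr0 scale1r. Qed.

Lemma ab_winv u : ab (winv u) = - ab u.
Proof.
elim: u => [|[b g] u IH]; first by rewrite ab_nil oppr0.
rewrite winv_cons ab_cat IH ab_cons ab_cons ab_nil addr0 opprD addrC; congr (_ + _).
by rewrite /ab_letter /=; case: g => [x|_]; rewrite ?signrN ?scaleNr ?oppr0.
Qed.

Lemma ab_wcomm a b : ab (wcomm a b) = 0.
Proof. by rewrite !ab_cat !ab_winv addrCA addKr addNr. Qed.

Lemma ab_wrel u w : wrel u w -> ab u = ab w.
Proof.
elim=> {u w} [u|u w _ ->|u v w _ -> _ ->|u w b g|u w r hr] //.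
  rewrite !ab_cat !ab_cons /ab_letter /=.
  by case: g => [x|_]; rewrite ?signrN ?scaleNr ?addNKr ?add0r.
rewrite !ab_cat; case: hr => [i j _|p|l p]; rewrite ?ab_wcomm ?add0r //.
by rewrite ab_cat ab_wcomm ab_winv ab_cons ab_nil /ab_letter /= !addr0 oppr0 !add0r.
Qed.

(* The y_{ij}-exponent of the commutator of words with abelianizations a
   and b is the minor a_i b_j - a_j b_i. *)
Definition comm_orth (a b : 'rV[int]_n) :=
  forall i j, ~~ e i j -> a 0 i * b 0 j = a 0 j * b 0 i.

(* For a non-edge {i, j}, sending x_i and x_j to the generators of the
   Heisenberg group and the other x_v to 1 defines a homomorphism. *)
Section HeisenbergQuotient.
Variables i j : 'I_n.
Hypotheses (e_sym : symmetric e) (neq_ij : i != j) (nedge_ij : ~~ e i j).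

Definition hgen_x (v : 'I_n) : heis :=
  if v == i then (1, 0, 0) else if v == j then (0, 1, 0) else hone.
Definition hgen (g : gen e) : heis :=
  if g is inr p then hcomm (hgen_x (sval p).2) (hgen_x (sval p).1) else
  if g is inl v then hgen_x v else hone.
Definition heval w : heis :=
  foldr (fun l => hmul (if l.1 then hinv (hgen l.2) else hgen l.2)) hone w.

Lemma heval_cat u w : heval (u ++ w) = hmul (heval u) (heval w).
Proof. by elim: u => [|l u IH] /=; rewrite ?hmul1g // IH hmulA. Qed.

Lemma hgen_x_edge a b : e a b ->
  (hgen_x a).1.1 * (hgen_x b).1.2 = (hgen_x b).1.1 * (hgen_x a).1.2.
Proof.
move=> hab; rewrite /hgen_x.
have [ai|ai] := eqVneq a i; have [bi|bi] := eqVneq b i;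
  have [aj|aj] := eqVneq a j; have [bj|bj] := eqVneq b j => //=; subst => //.
all: by move: nedge_ij; rewrite ?hab // e_sym hab.
Qed.

Lemma heval_relator r : relator r -> heval r = hone.
Proof.
case=> [a b hab|p|l p].
- by rewrite /= -/(hcomm (hgen_x b) (hgen_x a)) hcomm_trivial // (hgen_x_edge hab).
- rewrite heval_cat.
  have -> : heval (wcomm (wx e (sval p).2) (wx e (sval p).1)) = hgen (inr p) by [].
  by rewrite /= hmulg1 hmulgV.
- by rewrite /= -/(hcomm (hgen_x l) (hgen (inr p))) hcomm_trivial //=; ring.
Qed.

Lemma heval_wrel u w : wrel u w -> heval u = heval w.
Proof.
elim=> {u w} [u|u w _ ->|u v w _ -> _ ->|u w b g|u w r hr] //.
  rewrite !heval_cat /=; congr (hmul _ _); rewrite hmulA.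
  by case: b => /=; rewrite ?hmulVg ?hmulgV hmul1g.
by rewrite !heval_cat (heval_relator hr) hmul1g.
Qed.

Lemma heval_ab w : (heval w).1.1 = ab w 0 i /\ (heval w).1.2 = ab w 0 j.
Proof.
elim: w => [|[b g] w [IH1 IH2]]; first by rewrite ab_nil !mxE.
rewrite ab_cons !mxE -IH1 -IH2 /=.
case: g => [v|p] /=; last by case: b; rewrite /= ?mxE; split; ring.
rewrite /hgen_x !mxE (eq_sym i v) (eq_sym j v) /=.
have [->|_] := eqVneq v i; first rewrite (negbTE neq_ij).
  by case: b; rewrite ?expr0 ?expr1 /=; split; ring.
by case: (v == j); case: b; rewrite ?expr0 ?expr1 /=; split; ring.
Qed.

Lemma wcommute_minor u w :
  wcommute u w -> ab u 0 i * ab w 0 j = ab w 0 i * ab u 0 j.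
Proof.
move=> /heval_wrel; rewrite !heval_cat.
case: (heval_ab u) => <- <-; case: (heval_ab w) => <- <-.
by case: (heval u) => [[? ?] ?]; case: (heval w) => [[? ?] ?] [_ _ ?] /=; lia.
Qed.

End HeisenbergQuotient.

Lemma wcommute_comm_orth u w : symmetric e -> wcommute u w -> comm_orth (ab u) (ab w).
Proof.
move=> e_sym h i j hij; have [->|nij] := eqVneq i j; first by [].
by rewrite (wcommute_minor e_sym nij hij h) mulrC.
Qed.

End Abelianization.

Section CommutatorSubgroup.
Variables (n : nat) (e : rel 'I_n).
Hypothesis e_sym : symmetric e.
Implicit Types u v w : word e.

Definition is_wcomm w := exists a b, w = wcomm a b.

Lemma gsub_mono (S S' : word e -> Prop) :
  (forall w, S w -> S' w) -> forall w, gsub S w -> gsub S' w.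
Proof.
move=> h w; elim=> {w} [w /h|| u v _ IH1 _ IH2 | u _ IH | u v huv _ IH].
- exact: gs_base.
- exact: gs_nil.
- exact: gs_mul.
- exact: gs_inv.
- exact: gs_eq huv IH.
Qed.

Lemma gsub_central w : gsub is_wcomm w -> central w.
Proof.
elim=> {w} [w [a [b ->]]|| u v _ IH1 _ IH2 | u _ IH | u v huv _ IH].
- exact: central_wcomm.
- exact: central_nil.
- exact: central_cat.
- exact: central_winv.
- exact: central_wrel huv IH.
Qed.

Lemma gsub_wcomm_y (b : bool) p : gsub is_wcomm [:: (b, inr p)].
Proof.
have hy : gsub is_wcomm (wy p) by apply: gs_eq (wy_wcomm p) _; apply: gs_base; do 2 eexists.
by case: b => //; have := gs_inv hy.
Qed.

Lemma ab_notin_sign (b : bool) x w : (~~ b, inl x) \notin w ->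
  if b then ab w 0 x <= 0 else 0 <= ab w 0 x.
Proof.
elim: w => [|[b' g] w IH]; first by rewrite ab_nil mxE; case: b.
rewrite inE negb_or => /andP [hne /IH {}IH]; rewrite ab_cons !mxE /ab_letter.
case: g hne => [y|p] hne; last by rewrite mxE add0r.
rewrite !mxE /=; have [xy|_] := eqVneq x y; last by rewrite mulr0 add0r.
subst y; have -> : b' = b by move: hne; case: (b); case: (b') => //=; rewrite eqxx.
by clear hne; move: IH; case: b => /=; rewrite ?expr0 ?expr1 /=; lia.
Qed.

(* Cancel the first letter against an occurrence of its inverse, at the cost of
   a central commutator. *)
Lemma gsub_wcomm_ab0 w : ab w = 0 -> gsub is_wcomm w.
Proof.
move: {2}(size w) (leqnn (size w)) => m; elim: m w => [|m IH] w.
  by rewrite leqn0 => /nilP -> _; apply: gs_nil.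
case: w => [|[b g] w] hs hab; first exact: gs_nil.
case: g hs hab => [x|p] hs hab; last first.
  rewrite -cat1s; apply: gs_mul; first exact: gsub_wcomm_y.
  by apply: IH => //; move: hab; rewrite ab_cons /ab_letter /= add0r.
have hin : (~~ b, inl x) \in w.
  apply/negPn/negP => /ab_notin_sign; move/rowP/(_ x): hab.
  by rewrite ab_cons !mxE !eqxx; case: (b) => /=; rewrite ?expr0 ?expr1 /=; lia.
case/splitPr: hin hs hab => w1 w2 hs hab.
set l := (b, inl x) : bool * gen e; set c := wcomm [:: l] w1.
have hw : wrel (l :: w1 ++ (~~ b, inl x) :: w2) (w1 ++ w2 ++ c).
  apply: wr_trans (wrel_catr _ (wr_sym (wcomm_swap [:: l] w1))) _.
  rewrite -[(w1 ++ _) ++ _]catA -[([:: l] ++ _) ++ _]catA.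
  have := central_wcomm e_sym [:: l] w1 ((~~ b, inl x) :: w2).
  move=> /(wrel_catl [:: l]) /(wrel_catl w1) /wr_trans; apply.
  exact: wr_free w1 (w2 ++ c) b (inl x).
apply: gs_eq (wr_sym hw) _; rewrite catA; apply: gs_mul; last by apply: gs_base; do 2 eexists.
apply: IH; first by move: hs; rewrite /= !size_cat /=; lia.
by rewrite -hab ab_cons !ab_cat ab_cons /ab_letter /= signrN scaleNr addrCA addNKr.
Qed.

End CommutatorSubgroup.

Section WordOfVector.
Variables (n : nat) (e : rel 'I_n).
Implicit Types a b : 'rV[int]_n.

Definition wvec a : word e :=
  flatten [seq nseq (absz (a 0 v)) (a 0 v < 0, inl v) | v <- enum 'I_n].

Lemma ab_nseq m l : ab (nseq m l : word e) = ab_letter l *+ m.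
Proof. by elim: m => [|m IH]; rewrite ?ab_nil // ab_cons IH mulrS. Qed.

Lemma ab_flatten (s : seq (word e)) : ab (flatten s) = \sum_(w <- s) ab w.
Proof. by elim: s => [|w s IH]; rewrite ?big_nil ?ab_nil //= ab_cat IH big_cons. Qed.

Lemma ab_wvec a : ab (wvec a) = a.
Proof.
rewrite [RHS]row_sum_delta /wvec ab_flatten big_map big_enum /=.
apply: eq_bigr => v _; rewrite ab_nseq /ab_letter /= scalerMnl.
by rewrite -mulr_natr natz -intEsign.
Qed.

Lemma mem_wvec a l : l \in wvec a -> exists2 v, l = (a 0 v < 0, inl v) & a 0 v != 0.
Proof.
case/flatten_mapP => v _; rewrite mem_nseq => /andP [h /eqP ->].
by exists v => //; rewrite -absz_gt0.
Qed.

Lemma gsub_wvec (S : word e -> Prop) a :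
  (forall v, a 0 v != 0 -> S (wx e v)) -> gsub S (wvec a).
Proof.
move=> hS; rewrite /wvec; elim: (enum 'I_n) => [|v s IH] /=; first exact: gs_nil.
apply: gs_mul => //; have [->|hv] := eqVneq (a 0 v) 0; first exact: gs_nil.
have hl : gsub S [:: (a 0 v < 0, inl v)].
  have hx : gsub S (wx e v) by apply/gs_base/hS.
  by case: (a 0 v < 0); [exact: gs_inv hx | exact: hx].
by elim: (absz _) => [|m IHm]; [exact: gs_nil | exact: gs_mul hl IHm].
Qed.

Definition adjacent_supp a b :=
  forall s t, a 0 s != 0 -> b 0 t != 0 -> (s == t) || e s t.

Hypothesis e_sym : symmetric e.

Lemma wcommute_wvec a b : adjacent_supp a b -> wcommute (wvec a) (wvec b).
Proof.
move=> h; apply: wcommute_letters => l /mem_wvec [s -> hs].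
apply/wcommute_sym/wcommute_letters => l' /mem_wvec [t -> ht].
apply/wcommute_letter/wcommute_sym/wcommute_letter.
case/orP: (h s t hs ht) => [/eqP ->|hst]; first by rewrite /wcommute.
by apply: wcommute_edge; rewrite e_sym.
Qed.

End WordOfVector.

Section Automorphism.
Variables (n : nat) (e : rel 'I_n).
Hypothesis e_sym : symmetric e.
Variable phi : word e -> word e.
Hypothesis hphi : is_aut phi.
Implicit Types u v w : word e.
Implicit Types a b : 'rV[int]_n.

Lemma phi_wrel u v : wrel u v -> wrel (phi u) (phi v).
Proof. by case: hphi => h _ _ _; apply: h. Qed.

Lemma phi_cat u v : wrel (phi (u ++ v)) (phi u ++ phi v).
Proof. by case: hphi => _ h _ _; apply: h. Qed.

Lemma phi_inj u v : wrel (phi u) (phi v) -> wrel u v.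
Proof. by case: hphi => _ _ h _; apply: h. Qed.

Lemma phi_surj w : exists u, wrel (phi u) w.
Proof. by case: hphi => _ _ _ h; apply: h. Qed.

Lemma phi_nil : wrel (phi [::]) [::].
Proof.
have := wrel_catl (winv (phi [::])) (phi_cat [::] [::]).
by rewrite wrel_mulVg wrel_mulKg => h; symmetry.
Qed.

Lemma phi_winv u : wrel (phi (winv u)) (winv (phi u)).
Proof.
have h : wrel (phi (winv u) ++ phi u) [::].
  by rewrite -phi_cat (phi_wrel (wrel_mulVg u)) phi_nil.
transitivity (phi (winv u) ++ phi u ++ winv (phi u)); first by rewrite wrel_mulgV cats0.
by rewrite catA h.
Qed.

Lemma phi_wcomm u v : wrel (phi (wcomm u v)) (wcomm (phi u) (phi v)).
Proof. by rewrite /wcomm !phi_cat !phi_winv. Qed.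

Lemma phi_wcommute u v : wcommute (phi u) (phi v) <-> wcommute u v.
Proof.
rewrite /wcommute; split=> h; first by apply: phi_inj; rewrite !phi_cat.
by rewrite -!phi_cat (phi_wrel h).
Qed.

Definition aut_mx : 'M[int]_n := \matrix_i ab (phi (wx e i)).

Lemma ab_phi_letter l : ab (phi [:: l]) = ab [:: l] *m aut_mx.
Proof.
have phi_false g : ab (phi [:: (false, g)]) = ab [:: (false, g)] *m aut_mx.
  case: g => [v|p]; first by rewrite ab_wx -rowE rowK.
  rewrite -[[:: _]]/(wy p) (ab_wrel (phi_wrel (wr_sym (wy_wcomm p)))).
  by rewrite (ab_wrel (phi_wcomm _ _)) !ab_wcomm ab_cons ab_nil addr0 mul0mx.
case: l => [[] g] //; rewrite -[[:: _]]/(winv [:: (false, g)]).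
by rewrite (ab_wrel (phi_winv _)) !ab_winv phi_false mulNmx.
Qed.

Lemma ab_phi w : ab (phi w) = ab w *m aut_mx.
Proof.
elim: w => [|l w IH]; first by rewrite (ab_wrel phi_nil) ab_nil mul0mx.
by rewrite -cat1s (ab_wrel (phi_cat _ _)) !ab_cat ab_phi_letter IH mulmxDl.
Qed.

Lemma aut_mx_unit : aut_mx \in unitmx.
Proof.
have /fin_all_exists [c hc] : forall j, exists c : 'rV[int]_n, c *m aut_mx = delta_mx 0 j.
  move=> j; have [u hu] := phi_surj (wx e j).
  by exists (ab u); rewrite -ab_phi (ab_wrel hu) ab_wx.
suff /mulmx1_unit [] : (\matrix_j c j) *m aut_mx = 1%:M by [].
by apply/row_matrixP => j; rewrite row_mul rowK hc row1.
Qed.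

Lemma comm_orth_aut_mx a b :
  adjacent_supp e a b -> comm_orth e (a *m aut_mx) (b *m aut_mx).
Proof.
move=> /(wcommute_wvec e_sym) /phi_wcommute /(wcommute_comm_orth e_sym).
by rewrite !ab_phi !ab_wvec.
Qed.

Lemma phi_wvec a : exists2 z, central z & wrel (phi (wvec e a)) (wvec e (a *m aut_mx) ++ z).
Proof.
exists (winv (wvec e (a *m aut_mx)) ++ phi (wvec e a)); last by rewrite wrel_mulKVg.
apply/(gsub_central e_sym)/gsub_wcomm_ab0 => //.
by rewrite ab_cat ab_winv ab_phi !ab_wvec addNr.
Qed.

Lemma comm_orth_aut_mx_inv a b :
  adjacent_supp e (a *m aut_mx) (b *m aut_mx) -> comm_orth e a b.
Proof.
move=> /(wcommute_wvec e_sym) h.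
have [z hz hza] := phi_wvec a; have [z' hz' hzb] := phi_wvec b.
have : wcommute (phi (wvec e a)) (phi (wvec e b)).
  apply: wcommute_wrel (wr_sym hza) (wr_sym hzb) _.
  apply: wcommute_catl; last exact: hz.
  by apply/wcommute_sym/wcommute_catl; [exact: wcommute_sym | exact: hz'].
by move/phi_wcommute/(wcommute_comm_orth e_sym); rewrite !ab_wvec.
Qed.

End Automorphism.

Lemma unitmx_perm (R : idomainType) n (A : 'M[R]_n) :
  A \in unitmx -> exists s : 'S_n, forall i, A i (s i) != 0.
Proof.
rewrite unitmxE => uA; have detA : \det A != 0 by apply: contraTneq uA => ->; rewrite unitr0.
have /existsP [s /forallP hs] : [exists s : 'S_n, [forall i, A i (s i) != 0]].
  apply: contraR detA; rewrite negb_exists => /forallP h0.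
  rewrite /determinant big1 // => s _; have /forallPn [i /negbNE/eqP Ai0] := h0 s.
  by rewrite (bigD1 i) //= Ai0 mul0r mulr0.
by exists s.
Qed.

Lemma unitmx_minor2 (R : comUnitRingType) n (A : 'M[R]_n) r s :
  A \in unitmx -> r != s -> exists u u', A u r * A u' s != A u s * A u' r.
Proof.
move=> uA rs.
have [/existsP [u /existsP [u' h]]|] :=
  boolP [exists u, exists u', A u r * A u' s != A u s * A u' r]; first by exists u, u'.
rewrite negb_exists => /forallP h0; exfalso.
pose B := invmx A *m A.
have B_id : B r r * B s s - B r s * B s r = 1.
  by rewrite /B mulVmx // !mxE !eqxx (negbTE rs) eq_sym (negbTE rs) mulr1 mulr0 subr0.
suff : B r r * B s s - B r s * B s r = 0 by rewrite B_id => /eqP; rewrite oner_eq0.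
rewrite /B !mxE !mulr_suml -sumrB big1 // => u _.
rewrite !mulr_sumr -sumrB big1 // => u' _.
have := h0 u; rewrite negb_exists => /forallP /(_ u') /negbNE /eqP minor0.
by apply/eqP; rewrite subr_eq0; apply/eqP; rewrite mulrACA minor0 [RHS]mulrACA.
Qed.

Lemma proportional_trans (R : idomainType) (q1 q2 x1 x2 y1 y2 : R) :
  (q1 != 0) || (q2 != 0) ->
  x1 * q2 = x2 * q1 -> y1 * q2 = y2 * q1 -> x1 * y2 = x2 * y1.
Proof.
move=> q_neq0 hx hy; apply/eqP; rewrite -subr_eq0.
have e1 : q1 * (x1 * y2 - x2 * y1) = 0.
  transitivity (x1 * (y2 * q1 - y1 * q2) - y1 * (x2 * q1 - x1 * q2)); first ring.
  by rewrite hx hy !subrr !mulr0 subrr.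
have e2 : q2 * (x1 * y2 - x2 * y1) = 0.
  transitivity (y2 * (x1 * q2 - x2 * q1) - x2 * (y1 * q2 - y2 * q1)); first ring.
  by rewrite hx hy !subrr !mulr0 subrr.
by case/orP: q_neq0 => hq; [move/eqP: e1 | move/eqP: e2]; rewrite mulf_eq0 (negbTE hq).
Qed.

(* Otherwise all rows would have proportional (r, s)-parts, which contradicts
   invertibility. *)
Lemma unitmx_rows_split (R : idomainType) n (A : 'M[R]_n) (P : pred 'I_n) r s :
    A \in unitmx -> r != s ->
    (forall u v, P u -> ~~ P v -> A u r * A v s = A u s * A v r) ->
  (forall u, P u -> A u r = 0 /\ A u s = 0) \/
  (forall v, ~~ P v -> A v r = 0 /\ A v s = 0).
Proof.
move=> uA rs orth.
have [/existsP [u0 /andP [Pu0 nz0]]|] := boolP [exists u, P u && ((A u r != 0) || (A u s != 0))];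
  last first.
  rewrite negb_exists => /forallP h; left => u Pu.
  by move: (h u); rewrite Pu negb_or !negbK => /andP [/eqP -> /eqP ->].
right => v Pv; suff /norP [/negbNE/eqP -> /negbNE/eqP ->] : ~~ ((A v r != 0) || (A v s != 0)) by [].
apply/negP => nzv.
have par_v w : A w r * A v s = A w s * A v r.
  have [Pw|nPw] := boolP (P w); first exact: orth.
  apply: (proportional_trans nz0); rewrite mulrC [RHS]mulrC; apply/esym; exact: orth.
have [u [u' /eqP]] := unitmx_minor2 uA rs; apply.
exact: proportional_trans nzv (par_v u) (par_v u').
Qed.

Lemma perm_homo_mono (T : finType) (r : rel T) (f : {perm T}) :
  {homo f : x y / r x y} -> {mono f : x y / r x y}.
Proof.
move=> hf x y; apply/idP/idP => [rf|]; last exact: hf.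
pose E := [set xy : T * T | r xy.1 xy.2]; pose g (xy : T * T) := (f xy.1, f xy.2).
have g_inj : injective g by move=> [a b] [c d] [/perm_inj -> /perm_inj ->].
have gE : g @: E = E.
  apply/eqP; rewrite eqEcard (card_imset _ g_inj) leqnn andbT.
  by apply/subsetP => z /imsetP [[a b] hab ->]; rewrite !inE in hab *; apply: hf.
have : (f x, f y) \in g @: E by rewrite gE inE.
by case/imsetP => [[a b]]; rewrite inE => hab [/perm_inj -> /perm_inj ->].
Qed.

Section JoinDecomposition.
Variables (n : nat) (e : rel 'I_n) (k : nat) (part : 'I_n -> 'I_k).
Hypotheses (e_sym : symmetric e) (hjoin : join_decomp e part)
  (hirr : forall i, join_irreducible_part e part i).

Lemma nonedge_part u v : ~~ e u v -> part u = part v.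
Proof. by move=> huv; apply/eqP; apply: contraR huv => /hjoin.2 ->. Qed.

Lemma part_aut_eq (rho : {perm 'I_n}) u v : {mono rho : x y / e x y} ->
  part u = part v -> part (rho u) = part (rho v).
Proof.
move=> rho_aut puv.
pose A := [set w | (part w == part u) && (part (rho w) == part (rho u))].
suff : v \in A by rewrite inE => /andP [_ /eqP].
apply/negPn/negP => vA.
have [a [b [aA pb bA nab]]] : exists a b, [/\ a \in A, part b = part u, b \notin A & ~~ e a b].
  apply: hirr; first by move=> w; rewrite inE => /andP [/eqP].
    by apply/set0Pn; exists u; rewrite inE !eqxx.
  by exists v; rewrite -puv.
move: aA bA; rewrite !inE pb eqxx => /andP [_ /eqP <-] /=.
by rewrite (@nonedge_part (rho a) (rho b)) ?eqxx // rho_aut.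
Qed.

Lemma factor_perm (rho : {perm 'I_n}) : {mono rho : x y / e x y} ->
  exists sigma : {perm 'I_k}, forall v, part (rho v) = sigma (part v).
Proof.
move=> rho_aut; have /fin_all_exists [rep rep_part] := hjoin.1.
have rhoV_aut : {mono rho^-1%g : x y / e x y}.
  by move=> x y; rewrite -{2}(permKV rho x) -{2}(permKV rho y) rho_aut.
pose f i := part (rho (rep i)).
have fE v : part (rho v) = f (part v) by apply: part_aut_eq; rewrite ?rep_part.
have f_inj : injective f.
  move=> i j /(part_aut_eq rhoV_aut); rewrite !permK !rep_part.
  by apply.
by exists (perm f_inj) => v; rewrite permE.
Qed.

Lemma parts_iso_perm (rho : {perm 'I_n}) (sigma : {perm 'I_k}) :
    {mono rho : x y / e x y} -> (forall v, part (rho v) = sigma (part v)) ->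
  forall i, parts_iso e part i (sigma i).
Proof.
move=> rho_aut rho_part i; exists rho; split.
- by move=> u v _ _ /perm_inj.
- by move=> v <-; rewrite rho_part.
- move=> w hw; exists (rho^-1%g w); split; last by rewrite permKV.
  by apply: (@perm_inj _ sigma); rewrite -rho_part permKV.
- by move=> u v _ _; rewrite rho_aut.
Qed.

Definition supported (a : 'rV[int]_n) (I : pred 'I_k) :=
  forall x, ~~ I (part x) -> a 0 x = 0.

Lemma delta_supp (u s : 'I_n) : (delta_mx 0 u : 'rV[int]_n) 0 s != 0 -> s = u.
Proof. by rewrite mxE eqxx /=; case: (eqVneq s u) => // _; rewrite eqxx. Qed.

Lemma supported_ab_Hsub i w : Hsub e part i w -> supported (ab w) (pred1 i).
Proof.
elim=> {w} [w [[v [<- ->]] | [a [b ->]]] || u v _ IH1 _ IH2 | u _ IH | u v huv _ IH] x hx.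
- by rewrite ab_wx; apply: contraNeq hx => /delta_supp ->; rewrite /= eqxx.
- by rewrite ab_wcomm mxE.
- by rewrite ab_nil mxE.
- by rewrite ab_cat mxE IH1 // IH2 // addr0.
- by rewrite ab_winv mxE IH // oppr0.
- by rewrite -(ab_wrel huv) IH.
Qed.

Lemma Hsub_supported_ab i w : supported (ab w) (pred1 i) -> Hsub e part i w.
Proof.
move=> hw; have hX : Hsub e part i (wvec e (ab w)).
  apply: gsub_wvec => v hv; left; exists v; split => //.
  by apply/eqP; apply: contraR hv => /hw ->.
have hC : Hsub e part i (winv (wvec e (ab w)) ++ w).
  apply: (gsub_mono _ (gsub_wcomm_ab0 e_sym _)) => [z hz|]; first by right.
  by rewrite ab_cat ab_winv ab_wvec addNr.
exact: gs_eq (wrel_mulKVg _ _) (gs_mul hX hC).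
Qed.

Lemma Hsub_subset i j : (forall w, Hsub e part i w -> Hsub e part j w) -> i = j.
Proof.
have [v <-] := hjoin.1 i => /(_ (wx e v)) hv.
have /supported_ab_Hsub /(_ v) : Hsub e part j (wx e v).
  by apply/hv/gs_base; left; exists v.
by rewrite ab_wx mxE !eqxx /= => h; apply/eqP; apply: contraT => /h/eqP; rewrite oner_eq0.
Qed.

Lemma maps_onto_Hsub_inj (phi : word e -> word e) i j j' :
    maps_onto phi (Hsub e part i) (Hsub e part j) ->
    maps_onto phi (Hsub e part i) (Hsub e part j') -> j = j'.
Proof.
move=> [_ onto] [into _]; apply: Hsub_subset => w /onto [u [hu huw]].
exact: gs_eq huw (into _ hu).
Qed.

End JoinDecomposition.

Section CommutationMatrix.
Variables (n : nat) (e : rel 'I_n).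
Hypotheses (e_sym : symmetric e) (e_irr : irreflexive e).
Variable M : 'M[int]_n.
Hypotheses (M_unit : M \in unitmx)
  (M_orth : forall a b, adjacent_supp e a b -> comm_orth e (a *m M) (b *m M))
  (M_orth_inv : forall a b, adjacent_supp e (a *m M) (b *m M) -> comm_orth e a b).

Lemma comm_orth_row u v : e u v -> comm_orth e (row u M) (row v M).
Proof.
move=> huv; rewrite !rowE; apply: M_orth => s t /delta_supp -> /delta_supp ->.
by rewrite huv orbT.
Qed.

Lemma comm_orth_nonedge_neq0 (x y : 'rV[int]_n) p q :
  comm_orth e x y -> ~~ e p q -> x 0 p != 0 -> y 0 q != 0 -> x 0 q != 0 /\ y 0 p != 0.
Proof.
move=> /(_ p q) Oxy /Oxy hpq xp yq.
by split; apply/eqP => h0; move: hpq; rewrite h0 ?mul0r ?mulr0 => /eqP;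
  rewrite mulf_eq0 (negbTE xp) (negbTE yq).
Qed.

(* If p = pi u and q = pi v were not adjacent, the combination a of rows u and v
   vanishing off the neighbourhood of p would be orthogonal to the preimage c
   of e_p, confining c to the star of u; then row u would be orthogonal to e_p,
   forcing M u q = 0. *)
Lemma mx_perm_edge (pi : {perm 'I_n}) : (forall u, M u (pi u) != 0) ->
  {homo pi : u v / e u v}.
Proof.
move=> hpi u v euv; apply/negPn/negP => npq.
have nuv : u != v by apply: contraTneq euv => ->; rewrite e_irr.
set p := pi u in npq; set q := pi v in npq.
have Oxy i j : ~~ e i j -> M u i * M v j = M u j * M v i.
  by move=> nij; have := comm_orth_row euv nij; rewrite !mxE.
have [xq0 yp0] : M u q != 0 /\ M v p != 0.
  by have := comm_orth_nonedge_neq0 (comm_orth_row euv) npq; rewrite !mxE; apply.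
pose a : 'rV[int]_n := M u p *: delta_mx 0 v - M v p *: delta_mx 0 u.
have aM_nbhd s : (a *m M) 0 s != 0 -> e p s.
  rewrite mulmxBl -!scalemxAl -!rowE !mxE; apply: contraTT => nps.
  by rewrite (Oxy p s nps) mulrC subrr.
pose c : 'rV[int]_n := delta_mx 0 p *m invmx M.
have cM : c *m M = delta_mx 0 p by rewrite mulmxKV.
have Oac : comm_orth e a c.
  apply: M_orth_inv => s t /aM_nbhd hs; rewrite cM => /delta_supp ->.
  by rewrite e_sym hs orbT.
have c_star t : c 0 t != 0 -> (u == t) || e u t.
  have [//|nut] := eqVneq u t; apply: contraTT => /= nudt; rewrite negbK.
  have ntv : t != v by apply: contraNneq nudt => ->.
  move: (Oac u t nudt); rewrite !mxE !eqxx (negbTE nuv) (negbTE ntv) eq_sym (negbTE nut) /=.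
  by rewrite !mulr0 !mulr1 sub0r subr0 mul0r mulNr => /eqP; rewrite oppr_eq0 mulf_eq0 (negbTE yp0).
have Oxc : comm_orth e (row u M) (c *m M).
  by rewrite rowE; apply: M_orth => s t /delta_supp -> /c_star.
have nqp : q != p by rewrite (inj_eq perm_inj) eq_sym.
move: (Oxc q p); rewrite e_sym => /(_ npq); rewrite cM !mxE !eqxx (negbTE nqp) /=.
by rewrite mulr1 mulr0 => /eqP; rewrite (negbTE xq0).
Qed.

Variables (k : nat) (part : 'I_n -> 'I_k).
Hypotheses (hjoin : join_decomp e part)
  (no_full_degree : forall v : 'I_n, exists w, w != v /\ ~~ e v w).

(* Take r not adjacent to x: at {x, r}, either the rows of the factor of u or
   all other rows vanish, and the latter include row pi^-1 x. *)
Lemma mx_perm_block (pi : {perm 'I_n}) u x : (forall u, M u (pi u) != 0) ->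
  M u x != 0 -> part (pi^-1%g x) = part u.
Proof.
move=> hpi; apply: contraTeq => hne; rewrite negbK.
have [r [nrx nexr]] := no_full_degree x.
have orth w w' : part w == part u -> part w' != part u -> M w x * M w' r = M w r * M w' x.
  move=> /eqP pw pw'; have ew : e w w' by apply: hjoin.2; rewrite pw eq_sym.
  by have := comm_orth_row ew nexr; rewrite !mxE.
have xr : x != r by rewrite eq_sym.
have [/(_ u (eqxx _)) [-> _] // | h] := unitmx_rows_split M_unit xr orth.
by have := hpi (pi^-1%g x); rewrite permKV; case: (h _ hne) => -> _; rewrite eqxx.
Qed.

Section Blocks.
Variables (pi : {perm 'I_n}) (sigma : {perm 'I_k}).
Hypotheses (hpi : forall u, M u (pi u) != 0)
  (pi_part : forall v, part (pi v) = sigma (part v)).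

Lemma mx_part u x : M u x != 0 -> part x = sigma (part u).
Proof. by move/(mx_perm_block hpi) => <-; rewrite -pi_part permKV. Qed.

Lemma supported_mulmx a (I J : pred 'I_k) :
  (forall j, I j -> J (sigma j)) -> supported part a I -> supported part (a *m M) J.
Proof.
move=> IJ ha x hx; rewrite mxE big1 // => u _.
have [/eqP ->|/mx_part pxu] := boolP (M u x == 0); first by rewrite mulr0.
by rewrite ha ?mul0r //; apply: contra hx; rewrite pxu; apply: IJ.
Qed.

Lemma supported_mulmx_inv a i :
  supported part (a *m M) (pred1 (sigma i)) -> supported part a (pred1 i).
Proof.
move=> haM; pose a1 : 'rV[int]_n := \row_x (if part x == i then a 0 x else 0).
have a1_supp : supported part a1 (pred1 i) by move=> x /= /negbTE hx; rewrite mxE hx.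
have a2_supp : supported part (a - a1) (predC1 i).
  by move=> x /= /negPn hx; rewrite !mxE hx subrr.
have a2M0 : (a - a1) *m M = 0.
  apply/rowP => x; rewrite [RHS]mxE; have [pxi|pxi] := eqVneq (part x) (sigma i).
    apply: (supported_mulmx (J := predC1 (sigma i)) _ a2_supp); last by rewrite /= pxi eqxx.
    by move=> j /= /eqP ji; apply/eqP => /perm_inj.
  have h1 : (a *m M) 0 x = 0 by apply: haM; rewrite /= pxi.
  have h2 : (a1 *m M) 0 x = 0.
    apply: (supported_mulmx (J := pred1 (sigma i)) _ a1_supp) => [j /= /eqP -> //|].
    by rewrite /= pxi.
  by rewrite mulmxBl mxE h1 add0r mxE h2 oppr0.
move=> x /= hx; have /rowP/(_ x) := mulmxK M_unit (a - a1).
by rewrite a2M0 mul0mx !mxE (negbTE hx) subr0 => <-.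
Qed.

End Blocks.

End CommutationMatrix.

Section AutomorphismFactors.
Variables (n : nat) (e : rel 'I_n) (k : nat) (part : 'I_n -> 'I_k).
Hypotheses (e_sym : symmetric e) (hjoin : join_decomp e part)
  (no_full_degree : forall v : 'I_n, exists w, w != v /\ ~~ e v w).
Variable phi : word e -> word e.
Hypothesis hphi : is_aut phi.
Variables (pi : {perm 'I_n}) (sigma : {perm 'I_k}).
Hypotheses (hpi : forall u, aut_mx phi u (pi u) != 0)
  (pi_part : forall v, part (pi v) = sigma (part v)).

Lemma maps_onto_Hsub i : maps_onto phi (Hsub e part i) (Hsub e part (sigma i)).
Proof.
have M_unit := aut_mx_unit hphi; have M_orth := comm_orth_aut_mx e_sym hphi.
have supp_mul := supported_mulmx M_unit M_orth hjoin no_full_degree hpi pi_part.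
have supp_mul_inv := supported_mulmx_inv M_unit M_orth hjoin no_full_degree hpi pi_part.
split=> [w hw | w hw].
  apply: (Hsub_supported_ab e_sym); rewrite ab_phi //.
  by apply: supp_mul _ (supported_ab_Hsub hw) => j /= /eqP ->.
have [u hu] := phi_surj hphi w; exists u; split => //.
apply/(Hsub_supported_ab e_sym)/supp_mul_inv.
by rewrite -ab_phi // (ab_wrel hu); apply: supported_ab_Hsub.
Qed.

End AutomorphismFactors.

Theorem corollary5p10 (n : nat) (e : rel 'I_n)
  (e_sym : symmetric e) (e_irr : irreflexive e)
  (no_full_degree : forall v : 'I_n, exists w, w != v /\ ~~ e v w)
  (k : nat) (part : 'I_n -> 'I_k)
  (hjoin : join_decomp e part)
  (hirr : forall i : 'I_k, join_irreducible_part e part i)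
  (phi : word e -> word e) (hphi : is_aut phi) :
  exists sigma : {perm 'I_k},
    ((forall i : 'I_k,
        maps_onto phi (Hsub e part i) (Hsub e part (sigma i))) /\
     (forall i : 'I_k, parts_iso e part i (sigma i))) /\
    (forall tau : {perm 'I_k},
       ((forall i : 'I_k,
           maps_onto phi (Hsub e part i) (Hsub e part (tau i))) /\
        (forall i : 'I_k, parts_iso e part i (tau i))) -> tau = sigma).
Proof.
have [pi hpi] := unitmx_perm (aut_mx_unit hphi).
have pi_aut := perm_homo_mono (mx_perm_edge e_sym e_irr (aut_mx_unit hphi)
  (comm_orth_aut_mx e_sym hphi) (comm_orth_aut_mx_inv e_sym hphi) hpi).
have [sigma pi_part] := factor_perm hjoin hirr pi_aut.
have onto := maps_onto_Hsub e_sym hjoin no_full_degree hphi hpi pi_part.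
exists sigma; split.
  by split=> i; [exact: onto | exact: parts_iso_perm pi_aut pi_part i].
move=> tau [htau _]; apply/permP => i.
exact: (maps_onto_Hsub_inj hjoin (htau i) (onto i)).
Qed.
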